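(* Let $(S^*,c_{\lim})$ be a measurement tuple with $m$ measurements, adjoint fields $c_1^*,\dots,c_m^*$, and let $J_+=\{j:c_{\lim,j}>0\}$ and $J_-=\{j:c_{\lim,j}<0\}$ both be nonempty (so $J_+\cup J_-=\{1,\dots,m\}$). Assume $0<\sup c_j^*<\infty$ for $j\in J_+$. Let $k_j>0$ and $0\le\beta_j\le\alpha_j$ for $j=1,\dots,m$, and $$\mathcal S=\bigcap_{j=1}^m\{S\in\mathcal M^+:\ \beta_jS\{c_j^*\ge k_j\}\le S\{c_j^*<k_j\}\le\alpha_jS\{c_j^*\ge k_j\}\}.$$ Then: (i) $Z=\bigcup_{j\in J_-}\{c_j^*\ge k_j\}$ is a posterior $(S^*,c_{\lim},\mathcal S,M_{Z,\lim})$-zero footprint with $M_{Z,\lim}=\sum_{j\in J_-}\dfrac{-c_{\lim,j}}{k_j+\beta_j\inf c_j^*}$; (ii) $F=\bigcup_{j\in J_+}\{c_j^*\ge k_j\}$ is a posterior $(S^*,c_{\lim},\mathcal S,M_{F,\lim})$-footprint with $M_{F,\lim}=\max_{j\in J_+}\dfrac{c_{\lim,j}}{k_j\alpha_j+\sup c_j^*}$; (iii) $F\setminus Z$ is a posterior $(S^*,c_{\lim},\mathcal S,M_{\lim})$-footprint with $$M_{\lim}=M_{F,\lim}-M_{Z,\lim}=\max_{j\in J_+}\frac{c_{\lim,j}}{k_j\alpha_j+\sup c_j^*}+\sum_{j\in J_-}\frac{c_{\lim,j}}{k_j+\beta_j\inf c_j^*}.$$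
   Context: Let $T\subset\mathbb{R}$ be a time interval, $V\subset\mathbb{R}^3$ a spatial domain, and $\mathcal M^+$ the set of positive measures on the Borel sets of $T\times V$. A measurement tuple consists of $m\ge1$ nonnegative measurable functions $c_1^*,\dots,c_m^*$ on $T\times V$ (the adjoint concentration fields $c_j^*(s,y)=\int_{T\times V}p(t,x;s,y)\,dS_j^*(t,x)$ of sensor probability measures $S_j^*$, $p$ being the transition probability of the dispersion; we write $S^*=(S_1^*,\dots,S_m^* )$) together with a vector $c_{\lim}=(c_{\lim,1},\dots,c_{\lim,m})$ of nonzero reals. Write $\langle S,c^*\rangle=\int c^*\,dS$. A measure $S\in\mathcal M^+$ satisfies the measurement condition for $(S^*,c_{\lim})$ if for every $j$: $\langle S,c_j^*\rangle\ge c_{\lim,j}$ when $c_{\lim,j}>0$ (detection), and $\langle S,c_j^*\rangle<|c_{\lim,j}|$ when $c_{\lim,j}<0$ (non-detection). Given an admissible class $\mathcal S\subseteq\mathcal M^+$ and $M_{\lim}\in\mathbb R$, a measurable set $A\subseteq T\times V$ is: a posterior $(S^*,c_{\lim},\mathcal S,M_{\lim})$-footprint if every $S\in\mathcal S$ satisfying the measurement condition has $S(A)\ge M_{\lim}$; a prior $(S^*,c_{\lim},\mathcal S,M_{\lim})$-footprint if every $S\in\mathcal S$ with $S(A)\ge M_{\lim}$ satisfies the measurement condition; a posterior $(S^*,c_{\lim},\mathcal S,M_{\lim})$-zero footprint if every $S\in\mathcal S$ satisfying the measurement condition has $S(A)<M_{\lim}$; a prior $(S^*,c_{\lim},\mathcal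 S,M_{\lim})$-zero footprint if every $S\in\mathcal S$ with $S(A)<M_{\lim}$ satisfies the measurement condition. Suprema, infima and level sets $\{c_j^*\ge k\}=\{(s,y):c_j^*(s,y)\ge k\}$ are over $T\times V$. *)

From HB Require Import structures.
From mathcomp Require Import all_boot all_order all_algebra.
From mathcomp Require Import all_classical all_reals all_analysis.
Set Implicit Arguments. Unset Strict Implicit. Unset Printing Implicit Defensive.
Import Order.TTheory GRing.Theory Num.Theory.
Local Open Scope classical_set_scope.
Local Open Scope ring_scope.

Section Footprints.
Context {R : realType} {d : measure_display} {X : measurableType d} {m : nat}.

Definition pairing (S : {measure set X -> \bar R}) (c : X -> R) : \bar R :=
  (\int[S]_x (c x)%:E)%E.

(* the measurement condition for (S^*, c_lim), the c_j^* being the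
   adjoint fields c j *)
Definition measurement_condition (c : 'I_m -> X -> R) (clim : 'I_m -> R)
    (S : {measure set X -> \bar R}) : Prop :=
  forall j : 'I_m,
    (0 < clim j -> ((clim j)%:E <= pairing S (c j))%E) /\
    (clim j < 0 -> (pairing S (c j) < (`|clim j|)%:E)%E).

Definition geset (f : X -> R) (k : R) : set X := [set x | k <= f x].
Definition ltset (f : X -> R) (k : R) : set X := [set x | f x < k].

Definition posterior_footprint (c : 'I_m -> X -> R) (clim : 'I_m -> R)
    (Sadm : set {measure set X -> \bar R}) (Mlim : R) (A : set X) : Prop :=
  measurable A /\
  forall S, Sadm S -> measurement_condition c clim S -> (Mlim%:E <= S A)%E.

Definition posterior_zero_footprint (c : 'I_m -> X -> R) (clim : 'I_m -> R)
    (Sadm : set {measure set X -> \bar R}) (Mlim : R) (A : set X) : Prop :=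
  measurable A /\
  forall S, Sadm S -> measurement_condition c clim S -> (S A < Mlim%:E)%E.

Definition ratio_class (c : 'I_m -> X -> R) (k alpha beta : 'I_m -> R) :
    set {measure set X -> \bar R} :=
  [set S | forall j : 'I_m,
     ((beta j)%:E * S (geset (c j) (k j)) <= S (ltset (c j) (k j)))%E /\
     (S (ltset (c j) (k j)) <= (alpha j)%:E * S (geset (c j) (k j)))%E].

End Footprints.

From HB Require Import structures.
From mathcomp Require Import all_boot all_order all_algebra.
From mathcomp Require Import all_classical all_reals all_analysis.
From mathcomp Require Import measurable_realfun.
Import Order.TTheory GRing.Theory Num.Theory.
Local Open Scope classical_set_scope.
Local Open Scope ring_scope.

(** Split each pairing <S, c_j> at the level k_j: c_j lies between k_j and
    sup c_j on {c_j >= k_j} and between inf c_j and k_j on {c_j < k_j}.  With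
    the ratio constraints of the admissible class this gives
    (k_j + beta_j inf c_j) S{c_j >= k_j} <= <S, c_j>
                                         <= (k_j alpha_j + sup c_j) S{c_j >= k_j}.
    Non-detection therefore bounds S{c_j >= k_j} strictly from above for
    j in J_-, and subadditivity of S gives (i); detection bounds it from below
    for j in J_+, and S F dominates each of these sets, giving (ii); (iii)
    follows from S F <= S (F \ Z) + S Z. *)

Lemma inf_range_ge0 {R : realType} {T : Type} (f : T -> R) :
  (forall x, 0 <= f x) -> 0 <= inf (range f).
Proof.
move=> f_ge0; have [->|/set0P rf] := eqVneq (range f) set0; first by rewrite inf0.
by apply: lb_le_inf => // _ [x _ <-].
Qed.

Lemma inf_range_le {R : realType} {T : Type} (f : T -> R) (x : T) :
  (forall y, 0 <= f y) -> inf (range f) <= f x.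
Proof.
by move=> f_ge0; apply: ge_inf; [exists 0 => _ [y _ <-] | exists x].
Qed.

Lemma lte_sum_EFin {R : realType} (I : Type) (r : seq I) (P : pred I)
    (x : I -> \bar R) (y : I -> R) :
  has P r -> (forall i, P i -> (0 <= x i < (y i)%:E)%E) ->
  (\sum_(i <- r | P i) x i < (\sum_(i <- r | P i) y i)%:E)%E.
Proof.
move=> Pr xy; have xfin i : P i -> x i \is a fin_num.
  by case/xy/andP => x0 xlt; rewrite ge0_fin_numE // (lt_trans xlt) ?ltry.
rewrite -EFin_sum_fine // lte_fin; apply: ltr_sum => // i Pi.
by rewrite -lte_fin fineK ?xfin //; case/andP: (xy i Pi).
Qed.

Lemma measure_bigcup_le_sum {d : measure_display} {T : measurableType d}
    {R : realType} (mu : {measure set T -> \bar R}) {I : finType} (P : pred I)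
    (F : I -> set T) :
  (forall i, P i -> measurable (F i)) ->
  (mu (\bigcup_(i in [set i | P i]) F i) <= \sum_(i | P i) mu (F i))%E.
Proof.
move=> mF.
rewrite bigfs ?index_enum_uniq //; last by move=> i _; rewrite mem_index_enum.
apply: content_sub_fsum => //.
exact: fin_bigcup_measurable finite_finset mF.
Qed.

Section level_sets.
Context {R : realType} {d : measure_display} {X : measurableType d}.
Variables (f : X -> R) (k : R).
Hypotheses (mf : measurable_fun setT f) (f_ge0 : forall x, 0 <= f x).

Lemma measurable_geset : measurable (geset f k).
Proof.
have := mf measurableT _ (measurable_itv `[k, +oo[); rewrite setTI.
by congr measurable; apply/seteqP; split => x; rewrite /= in_itv /= andbT.
Qed.

Lemma measurable_ltset : measurable (ltset f k).
Proof.
have := mf measurableT _ (measurable_itv `]-oo, k[); rewrite setTI.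
by congr measurable; apply/seteqP; split => x; rewrite /= in_itv.
Qed.

Let measurable_EFin_f D : measurable_fun D (EFin \o f).
Proof. by apply/measurable_EFinP; apply: measurable_funS mf. Qed.

Lemma pairing_geset_ltset (S : {measure set X -> \bar R}) :
  pairing S f = (\int[S]_(x in geset f k) (f x)%:E +
                 \int[S]_(x in ltset f k) (f x)%:E)%E.
Proof.
rewrite /pairing; have -> : [set: X] = geset f k `|` ltset f k.
  by apply/seteqP; split => x //= _; case: (leP k (f x)); [left | right].
apply: ge0_integral_setU.
- exact: measurable_geset.
- exact: measurable_ltset.
- exact: measurable_EFin_f.
- by move=> x _; rewrite lee_fin.
- by apply/disj_setPS => x [/= kf /(le_lt_trans kf)]; rewrite ltxx.
Qed.

Lemma pairing_ge (S : {measure set X -> \bar R}) (i : R) :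
  0 <= k -> 0 <= i -> (forall x, i <= f x) ->
  (k%:E * S (geset f k) + i%:E * S (ltset f k) <= pairing S f)%E.
Proof.
move=> k0 i0 fi; rewrite pairing_geset_ltset.
have mG := measurable_geset; have mL := measurable_ltset.
apply: leeD; rewrite -integral_cst //; apply: ge0_le_integral => //.
by move=> x _; rewrite lee_fin.
Qed.

Lemma pairing_le (S : {measure set X -> \bar R}) (u : R) :
  0 <= k -> (forall x, f x <= u) ->
  (pairing S f <= u%:E * S (geset f k) + k%:E * S (ltset f k))%E.
Proof.
move=> k0 fu; rewrite pairing_geset_ltset.
have mG := measurable_geset; have mL := measurable_ltset.
apply: leeD; rewrite -integral_cst //; apply: ge0_le_integral => //.
- by move=> x _; rewrite lee_fin.
- by move=> x _; rewrite lee_fin.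
- by move=> x _; rewrite lee_fin.
- by move=> x /ltW; rewrite lee_fin.
Qed.

Lemma measure_geset_lt (S : {measure set X -> \bar R}) (i b a : R) :
  0 < k -> 0 <= i -> (forall x, i <= f x) -> 0 <= b ->
  (b%:E * S (geset f k) <= S (ltset f k))%E ->
  (pairing S f < a%:E)%E ->
  (S (geset f k) < (a / (k + b * i))%:E)%E.
Proof.
move=> k0 i0 fi b0 ratio fa.
rewrite EFinM lte_pdivlMr; last by rewrite ltr_wpDr ?mulr_ge0.
apply: le_lt_trans fa; apply: le_trans _ (pairing_ge S i (ltW k0) i0 fi).
have bi0 : 0 <= b * i by rewrite mulr_ge0.
rewrite EFinD ge0_muleDr ?lee_fin ?(ltW k0) // muleC leeD2l //.
rewrite EFinM (muleC b%:E) muleCA; apply: lee_wpmul2l; first by rewrite lee_fin.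
by rewrite muleC.
Qed.

Lemma measure_geset_ge (S : {measure set X -> \bar R}) (u al a : R) :
  0 < k -> 0 < u -> (forall x, f x <= u) -> 0 <= al ->
  (S (ltset f k) <= al%:E * S (geset f k))%E ->
  (a%:E <= pairing S f)%E ->
  ((a / (k * al + u))%:E <= S (geset f k))%E.
Proof.
move=> k0 u0 fu al0 ratio af.
have kal0 : 0 <= k * al by rewrite mulr_ge0 // ltW.
rewrite EFinM lee_pdivrMr; last by rewrite ltr_wpDl.
apply: le_trans af (le_trans (pairing_le S u (ltW k0) fu) _).
rewrite EFinD ge0_muleDr ?lee_fin ?(ltW u0) // [in leRHS]addeC.
apply: leeD; first by rewrite muleC.
rewrite EFinM muleCA; apply: lee_wpmul2l; first by rewrite lee_fin ltW.
by rewrite muleC.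
Qed.
End level_sets.

Lemma posterior_footprint_setD {R : realType} {d : measure_display}
    {X : measurableType d} {m : nat} (c : 'I_m -> X -> R) (clim : 'I_m -> R)
    (Sadm : set {measure set X -> \bar R}) (MF MZ : R) (F Z : set X) :
  posterior_footprint c clim Sadm MF F ->
  posterior_zero_footprint c clim Sadm MZ Z ->
  posterior_footprint c clim Sadm (MF - MZ) (F `\` Z).
Proof.
move=> [mF FP] [mZ ZP]; split; first exact: measurableD.
move=> S adm_S mc_S; rewrite EFinB leeBlDr //.
apply: le_trans (FP S adm_S mc_S) _; rewrite (measureDI S mF mZ) leeD2l //.
apply: le_trans (ltW (ZP S adm_S mc_S)); apply: le_measure; rewrite ?inE //.
exact: measurableI.
Qed.

Section ratio_class.
Context {R : realType} {d : measure_display} {X : measurableType d} {m : nat}.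
Variables (c : 'I_m -> X -> R) (clim k alpha beta : 'I_m -> R).
Hypotheses (mc : forall j, measurable_fun setT (c j))
  (c_ge0 : forall j x, 0 <= c j x) (k_gt0 : forall j, 0 < k j)
  (beta_ge0 : forall j, 0 <= beta j) (beta_le_alpha : forall j, beta j <= alpha j).

Let mG j : measurable (geset (c j) (k j)) := measurable_geset _ _ (mc j).

Lemma measurable_bigcup_geset (J : pred 'I_m) :
  measurable (\bigcup_(j in [set j | J j]) geset (c j) (k j)).
Proof. exact: fin_bigcup_measurable finite_finset (fun j _ => mG j). Qed.

Lemma ratio_class_zero_footprint : (exists j, clim j < 0) ->
  posterior_zero_footprint c clim (ratio_class c k alpha beta)
    (\sum_(j < m | clim j < 0) (- clim j) / (k j + beta j * inf (range (c j))))
    (\bigcup_(j in [set j | clim j < 0]) geset (c j) (k j)).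
Proof.
move=> [jn clim_jn]; split; first exact: measurable_bigcup_geset.
move=> S adm_S mc_S.
apply: le_lt_trans (measure_bigcup_le_sum S _ _ (fun j _ => mG j)) _.
apply: lte_sum_EFin => [|j clim_j].
  by apply/hasP; exists jn; rewrite ?mem_index_enum.
rewrite measure_ge0 /=; apply: measure_geset_lt => //.
- exact: inf_range_ge0.
- by move=> x; apply: inf_range_le.
- exact: (adm_S j).1.
- by rewrite -ltr0_norm //; apply: (mc_S j).2.
Qed.

Lemma ratio_class_footprint :
  (forall j, 0 < clim j ->
     has_ubound (range (c j)) /\ 0 < sup (range (c j))) ->
  posterior_footprint c clim (ratio_class c k alpha beta)
    (\big[Num.max/0]_(j < m | 0 < clim j)
       (clim j / (k j * alpha j + sup (range (c j)))))
    (\bigcup_(j in [set j | 0 < clim j]) geset (c j) (k j)).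
Proof.
move=> c_sup; split; first exact: measurable_bigcup_geset.
move=> S adm_S mc_S; apply: (big_ind (fun y : R => (y%:E <= _)%E)).
- exact: measure_ge0.
- by move=> x y xS yS; rewrite maxEle; case: ifP.
move=> j clim_j; have [c_ub sup_gt0] := c_sup j clim_j.
apply: (@le_trans _ _ (S (geset (c j) (k j)))).
  apply: measure_geset_ge => //.
  - by move=> x; apply: ub_le_sup => //; exists x.
  - exact: le_trans (beta_le_alpha j).
  - exact: (adm_S j).2.
  - exact: (mc_S j).1.
apply: le_measure; rewrite ?inE //; last by move=> x Gx; exists j.
exact: measurable_bigcup_geset.
Qed.

End ratio_class.

Theorem mainTheorem15 (R : realType) (d : measure_display) (X : measurableType d)
    (m : nat) (c : 'I_m -> X -> R) (clim : 'I_m -> R)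
    (k alpha beta : 'I_m -> R) :
  (0 < m)%N ->
  (forall j, measurable_fun setT (c j)) ->
  (forall j x, 0 <= c j x) ->
  (forall j, clim j != 0) ->
  (exists j, 0 < clim j) ->
  (exists j, clim j < 0) ->
  (forall j, 0 < clim j -> has_ubound (range (c j)) /\ 0 < sup (range (c j))) ->
  (forall j, 0 < k j) ->
  (forall j, 0 <= beta j /\ beta j <= alpha j) ->
  let Sadm := ratio_class c k alpha beta in
  let Z := \bigcup_(j in [set j | clim j < 0]) geset (c j) (k j) in
  let F := \bigcup_(j in [set j | 0 < clim j]) geset (c j) (k j) in
  let MZ := \sum_(j < m | clim j < 0)
              (- clim j) / (k j + beta j * inf (range (c j))) in
  let MF := \big[Num.max/0]_(j < m | 0 < clim j)
              (clim j / (k j * alpha j + sup (range (c j)))) in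
  [/\ posterior_zero_footprint c clim Sadm MZ Z,
      posterior_footprint c clim Sadm MF F
    & posterior_footprint c clim Sadm (MF - MZ) (F `\` Z)].
Proof.
move=> _ mc c_ge0 _ _ clim_neg c_sup k_gt0 beta_alpha Sadm Z F MZ MF.
have beta_ge0 j := (beta_alpha j).1; have beta_le_alpha j := (beta_alpha j).2.
have zero_fp : posterior_zero_footprint c clim Sadm MZ Z.
  exact: ratio_class_zero_footprint.
have fp : posterior_footprint c clim Sadm MF F by exact: ratio_class_footprint.
by split=> //; apply: posterior_footprint_setD.
Qed.
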